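(* Every free adequate semigroup and every free adequate monoid is $\mathcal{J}$-trivial, i.e. no two distinct elements generate the same principal two-sided ideal.
   Context: For a semigroup $S$ let $S^1=S$ if $S$ is a monoid and otherwise $S$ with an identity adjoined. $a\,\mathcal{L}^*\,b$ iff for all $x,y\in S^1$: $ax=ay\Leftrightarrow bx=by$; $a\,\mathcal{R}^*\,b$ iff for all $x,y\in S^1$: $xa=ya\Leftrightarrow xb=yb$. $S$ is adequate if its idempotents commute and every $\mathcal{L}^*$-class and every $\mathcal{R}^*$-class contains an idempotent (necessarily unique); $x^+$ is the idempotent $\mathcal{R}^*$-related to $x$, $x^*$ the idempotent $\mathcal{L}^*$-related to $x$. Adequate semigroups [monoids] are viewed as $(2,1,1)$-algebras [$(2,1,1,0)$-algebras], morphisms preserving all operations. The free adequate semigroup [monoid] on a set $\Sigma$ is an adequate semigroup [monoid] containing $\Sigma$ such that every map from $\Sigma$ to an adequate semigroup [monoid] extends uniquely to a morphism. Two elements $a,b$ are $\mathcal{J}$-related if $S^1aS^1=S^1bS^1$. *)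

Section Green.
Variable (S : Type) (mul : S -> S -> S).

(* Right/left multiplication by an element of S^1 = option S,
   where None is the identity adjoined to S. *)
Definition rmul1 (a : S) (x : option S) : S :=
  match x with None => a | Some x => mul a x end.
Definition lmul1 (x : option S) (a : S) : S :=
  match x with None => a | Some x => mul x a end.

Definition Lstar (a b : S) : Prop :=
  forall x y : option S, rmul1 a x = rmul1 a y <-> rmul1 b x = rmul1 b y.

Definition Rstar (a b : S) : Prop :=
  forall x y : option S, lmul1 x a = lmul1 y a <-> lmul1 x b = lmul1 y b.

Definition in_ideal (b a : S) : Prop :=
  exists x y : option S, b = lmul1 x (rmul1 a y).

Definition Jrel (a b : S) : Prop := in_ideal a b /\ in_ideal b a.

Definition J_trivial : Prop := forall a b : S, Jrel a b -> a = b.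

End Green.

Record AdequateSemigroup := {
  carrier :> Type;
  mul : carrier -> carrier -> carrier;
  plus : carrier -> carrier;
  star : carrier -> carrier;
  mulA : forall x y z, mul x (mul y z) = mul (mul x y) z;
  idem_comm : forall e f, mul e e = e -> mul f f = f -> mul e f = mul f e;
  plus_idem : forall x, mul (plus x) (plus x) = plus x;
  plus_Rstar : forall x, Rstar carrier mul (plus x) x;
  star_idem : forall x, mul (star x) (star x) = star x;
  star_Lstar : forall x, Lstar carrier mul (star x) x
}.

Definition adequate_morph (S T : AdequateSemigroup) (h : S -> T) : Prop :=
  (forall x y, h (mul S x y) = mul T (h x) (h y)) /\
  (forall x, h (plus S x) = plus T (h x)) /\
  (forall x, h (star S x) = star T (h x)).

Record AdequateMonoid := {
  asg :> AdequateSemigroup;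
  one : asg;
  mul1x : forall x, mul asg one x = x;
  mulx1 : forall x, mul asg x one = x
}.

Definition adequate_monoid_morph (M N : AdequateMonoid) (h : M -> N) : Prop :=
  adequate_morph M N h /\ h (one M) = one N.

Definition is_free_adequate_semigroup (Sigma : Type) (S : AdequateSemigroup)
    (iota : Sigma -> S) : Prop :=
  forall (T : AdequateSemigroup) (f : Sigma -> T),
    exists h : S -> T,
      (adequate_morph S T h /\ forall s, h (iota s) = f s) /\
      (forall h' : S -> T, adequate_morph S T h' ->
         (forall s, h' (iota s) = f s) -> forall x, h' x = h x).

Definition is_free_adequate_monoid (Sigma : Type) (M : AdequateMonoid)
    (iota : Sigma -> M) : Prop :=
  forall (N : AdequateMonoid) (f : Sigma -> N),
    exists h : M -> N,
      (adequate_monoid_morph M N h /\ forall s, h (iota s) = f s) /\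
      (forall h' : M -> N, adequate_monoid_morph M N h' ->
         (forall s, h' (iota s) = f s) -> forall x, h' x = h x).

From Stdlib Require Import Arith Lia ProofIrrelevance.

(* Map every generator to 1 in the adequate monoid (nat, +, 0, 0) to get a
   length function [d] that is additive and kills [x^+] and [x^*].  Elements
   of length 0 lie in the subalgebra generated by no letters, which consists
   of idempotents (products of commuting idempotents are idempotent), so in
   [a = x b y], [b = x' a y'] all of [x, y, x', y'] are idempotents of S^1.
   Then [b = (x' x) b (y y')], and since left and right multiplications by
   commuting idempotents are commuting idempotent operators, [x b = b] and
   [b y = b], whence [a = b]. *)

Lemma fixed_by_commuting_idempotents (T : Type) (E F : T -> T) :
  (forall z, E (E z) = E z) -> (forall z, F (F z) = F z) ->
  (forall z, E (F z) = F (E z)) ->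
  forall b, E (F b) = b -> E b = b /\ F b = b.
Proof.
  intros HE HF HEF b Hb; split.
  - rewrite <- Hb at 1; rewrite HE; exact Hb.
  - rewrite <- Hb at 1; rewrite <- HEF, HF; exact Hb.
Qed.

Lemma compose_commuting_idempotents (T : Type) (E F : T -> T) :
  (forall z, E (E z) = E z) -> (forall z, F (F z) = F z) ->
  (forall z, E (F z) = F (E z)) ->
  forall z, E (F (E (F z))) = E (F z).
Proof. intros HE HF HEF z; rewrite <- (HEF (F z)), HF, HE; reflexivity. Qed.

Section GradedCommutingIdempotents.
Variables (T : Type) (op : T -> T -> T).
Hypothesis opA : forall x y z, op x (op y z) = op (op x y) z.
Hypothesis idempotents_commute :
  forall e f, op e e = e -> op f f = f -> op e f = op f e.
Variable d : T -> nat.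
Hypothesis d_op : forall x y, d (op x y) = d x + d y.
Hypothesis d0_idempotent : forall x, d x = 0 -> op x x = x.

Local Notation L := (lmul1 T op).
Local Notation R := (rmul1 T op).

Definition idempotent1 (e : option T) : Prop :=
  match e with None => True | Some e => op e e = e end.
Definition d1 (x : option T) : nat := match x with None => 0 | Some x => d x end.

Lemma d_lmul1 x z : d (L x z) = d1 x + d z.
Proof. destruct x; simpl; auto. Qed.
Lemma d_rmul1 x z : d (R z x) = d z + d1 x.
Proof. destruct x; simpl; auto. Qed.
Lemma d1_idempotent x : d1 x = 0 -> idempotent1 x.
Proof. destruct x; simpl; auto. Qed.

Lemma lmul1_idem e z : idempotent1 e -> L e (L e z) = L e z.
Proof. destruct e; simpl; auto; intros He; rewrite opA, He; reflexivity. Qed.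
Lemma rmul1_idem e z : idempotent1 e -> R (R z e) e = R z e.
Proof. destruct e; simpl; auto; intros He; rewrite <- opA, He; reflexivity. Qed.
Lemma lmul1_comm e f z :
  idempotent1 e -> idempotent1 f -> L e (L f z) = L f (L e z).
Proof.
  destruct e, f; simpl; auto; intros He Hf.
  rewrite !opA, (idempotents_commute _ _ He Hf); reflexivity.
Qed.
Lemma rmul1_comm e f z :
  idempotent1 e -> idempotent1 f -> R (R z e) f = R (R z f) e.
Proof.
  destruct e, f; simpl; auto; intros He Hf.
  rewrite <- !opA, (idempotents_commute _ _ He Hf); reflexivity.
Qed.
Lemma lmul1_rmul1 e f z : L e (R z f) = R (L e z) f.
Proof. destruct e, f; simpl; auto. Qed.

Lemma graded_J_trivial : J_trivial T op.
Proof.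
  intros a b [[x [y Ha]] [x' [y' Hb]]].
  pose proof (f_equal d Ha) as Da; pose proof (f_equal d Hb) as Db.
  rewrite d_lmul1, d_rmul1 in Da, Db.
  assert (ix : idempotent1 x) by (apply d1_idempotent; lia).
  assert (iy : idempotent1 y) by (apply d1_idempotent; lia).
  assert (ix' : idempotent1 x') by (apply d1_idempotent; lia).
  assert (iy' : idempotent1 y') by (apply d1_idempotent; lia).
  set (E := fun z => L x' (L x z)); set (F := fun z => R (R z y) y').
  assert (HE : forall z, E (E z) = E z).
  { apply (compose_commuting_idempotents _ (L x') (L x));
      auto using lmul1_idem, lmul1_comm. }
  assert (HF : forall z, F (F z) = F z).
  { apply (compose_commuting_idempotents _ (fun z => R z y') (fun z => R z y));
      auto using rmul1_idem, rmul1_comm. }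
  assert (HEF : forall z, E (F z) = F (E z)).
  { intros z; unfold E, F; rewrite <- !lmul1_rmul1; reflexivity. }
  assert (Hb' : E (F b) = b).
  { rewrite Hb at 2; rewrite Ha; unfold E, F; rewrite <- lmul1_rmul1; reflexivity. }
  destruct (fixed_by_commuting_idempotents _ E F HE HF HEF b Hb') as [HEb HFb].
  assert (Hxb : L x b = b).
  { apply (fixed_by_commuting_idempotents _ (L x') (L x)); [..| exact HEb];
      auto using lmul1_idem, lmul1_comm. }
  assert (Hby : R b y = b).
  { apply (fixed_by_commuting_idempotents _ (fun z => R z y') (fun z => R z y));
      [..| exact HFb]; auto using rmul1_idem, rmul1_comm. }
  rewrite Ha, Hby; exact Hxb.
Qed.

End GradedCommutingIdempotents.

Lemma nat_add_Rstar (x : nat) : Rstar nat Nat.add 0 x.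
Proof. intros [a|] [b|]; simpl; lia. Qed.
Lemma nat_add_Lstar (x : nat) : Lstar nat Nat.add 0 x.
Proof. intros [a|] [b|]; simpl; lia. Qed.

Definition nat_adequate : AdequateSemigroup :=
  {| carrier := nat; mul := Nat.add; plus := fun _ => 0; star := fun _ => 0;
     mulA := Nat.add_assoc;
     idem_comm := fun e f _ _ => Nat.add_comm e f;
     plus_idem := fun _ => eq_refl;
     plus_Rstar := nat_add_Rstar;
     star_idem := fun _ => eq_refl;
     star_Lstar := nat_add_Lstar |}.

Definition nat_adequate_monoid : AdequateMonoid :=
  {| asg := nat_adequate; one := (0 : nat_adequate);
     mul1x := fun _ => eq_refl; mulx1 := Nat.add_0_r |}.

Section InjectiveHom.
Variables (A B : Type) (mA : A -> A -> A) (mB : B -> B -> B) (j : A -> B).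
Hypothesis j_inj : forall a a', j a = j a' -> a = a'.
Hypothesis j_mul : forall a a', j (mA a a') = mB (j a) (j a').

Lemma lmul1_hom x a : j (lmul1 A mA x a) = lmul1 B mB (option_map j x) (j a).
Proof. destruct x; simpl; auto. Qed.
Lemma rmul1_hom x a : j (rmul1 A mA a x) = rmul1 B mB (j a) (option_map j x).
Proof. destruct x; simpl; auto. Qed.

Lemma Rstar_reflect a b : Rstar B mB (j a) (j b) -> Rstar A mA a b.
Proof.
  intros Hab x y; split; intros H; apply j_inj; rewrite !lmul1_hom;
    apply Hab; rewrite <- !lmul1_hom; congruence.
Qed.
Lemma Lstar_reflect a b : Lstar B mB (j a) (j b) -> Lstar A mA a b.
Proof.
  intros Hab x y; split; intros H; apply j_inj; rewrite !rmul1_hom;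
    apply Hab; rewrite <- !rmul1_hom; congruence.
Qed.

End InjectiveHom.

Section Subalgebra.
Variables (S : AdequateSemigroup) (P : S -> Prop).
Hypothesis P_mul : forall x y, P x -> P y -> P (mul S x y).
Hypothesis P_plus : forall x, P x -> P (plus S x).
Hypothesis P_star : forall x, P x -> P (star S x).

Definition sub_mul (a b : {x : S | P x}) : {x : S | P x} :=
  exist _ _ (P_mul _ _ (proj2_sig a) (proj2_sig b)).
Definition sub_plus (a : {x : S | P x}) : {x : S | P x} :=
  exist _ _ (P_plus _ (proj2_sig a)).
Definition sub_star (a : {x : S | P x}) : {x : S | P x} :=
  exist _ _ (P_star _ (proj2_sig a)).

Lemma sub_val_inj (a b : {x : S | P x}) : proj1_sig a = proj1_sig b -> a = b.
Proof.
  destruct a as [a pa], b as [b pb]; simpl; intros ->.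
  f_equal; apply proof_irrelevance.
Qed.

Definition sub_adequate : AdequateSemigroup.
Proof.
  refine {| carrier := {x : S | P x}; mul := sub_mul; plus := sub_plus;
            star := sub_star |}.
  - intros; apply sub_val_inj, mulA.
  - intros e f He Hf; apply sub_val_inj, idem_comm.
    + exact (f_equal (@proj1_sig _ _) He).
    + exact (f_equal (@proj1_sig _ _) Hf).
  - intros; apply sub_val_inj, plus_idem.
  - intros a; apply (Rstar_reflect _ _ _ _ _ sub_val_inj (fun _ _ => eq_refl)).
    apply plus_Rstar.
  - intros; apply sub_val_inj, star_idem.
  - intros a; apply (Lstar_reflect _ _ _ _ _ sub_val_inj (fun _ _ => eq_refl)).
    apply star_Lstar.
Defined.

End Subalgebra.

Definition sub_adequate_monoid (M : AdequateMonoid) (P : M -> Prop)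
  (P_mul : forall x y, P x -> P y -> P (mul M x y))
  (P_plus : forall x, P x -> P (plus M x))
  (P_star : forall x, P x -> P (star M x))
  (P_one : P (one M)) : AdequateMonoid.
Proof.
  refine {| asg := sub_adequate M P P_mul P_plus P_star;
            one := exist P (one M) P_one |}.
  - intros; apply sub_val_inj, mul1x.
  - intros; apply sub_val_inj, mulx1.
Defined.

Lemma adequate_morph_comp (S T U : AdequateSemigroup) (g : T -> U) (h : S -> T) :
  adequate_morph T U g -> adequate_morph S T h ->
  adequate_morph S U (fun x => g (h x)).
Proof.
  intros [gm [gp gs]] [hm [hp hs]]; repeat split; intros;
    [rewrite hm, gm | rewrite hp, gp | rewrite hs, gs]; reflexivity.
Qed.

Lemma adequate_morph_id (S : AdequateSemigroup) : adequate_morph S S (fun x => x).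
Proof. repeat split. Qed.

Lemma adequate_morph_proj1_sig (S : AdequateSemigroup) (P : S -> Prop) Pm Pp Ps :
  adequate_morph (sub_adequate S P Pm Pp Ps) S (@proj1_sig _ _).
Proof. repeat split. Qed.

Lemma free_adequate_semigroup_endo_id Sigma (S : AdequateSemigroup) iota :
  is_free_adequate_semigroup Sigma S iota ->
  forall g : S -> S, adequate_morph S S g -> (forall s, g (iota s) = iota s) ->
  forall x, g x = x.
Proof.
  intros Hfree g Hg Hgi x; destruct (Hfree S iota) as [h [_ Huniq]].
  rewrite (Huniq g Hg Hgi x); symmetry.
  exact (Huniq _ (adequate_morph_id S) (fun _ => eq_refl) x).
Qed.

Lemma free_adequate_monoid_endo_id Sigma (M : AdequateMonoid) iota :
  is_free_adequate_monoid Sigma M iota ->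
  forall g : M -> M, adequate_monoid_morph M M g -> (forall s, g (iota s) = iota s) ->
  forall x, g x = x.
Proof.
  intros Hfree g Hg Hgi x; destruct (Hfree M iota) as [h [_ Huniq]].
  rewrite (Huniq g Hg Hgi x); symmetry.
  exact (Huniq _ (conj (adequate_morph_id M) eq_refl) (fun _ => eq_refl) x).
Qed.

Lemma free_adequate_semigroup_ind Sigma (S : AdequateSemigroup) iota
  (Hfree : is_free_adequate_semigroup Sigma S iota) (P : S -> Prop)
  (P_mul : forall x y, P x -> P y -> P (mul S x y))
  (P_plus : forall x, P x -> P (plus S x))
  (P_star : forall x, P x -> P (star S x))
  (P_gen : forall s, P (iota s)) : forall x, P x.
Proof.
  destruct (Hfree (sub_adequate S P P_mul P_plus P_star)
              (fun s => exist _ (iota s) (P_gen s))) as [h [[Hh Hhi] _]].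
  intros x; rewrite <- (free_adequate_semigroup_endo_id _ _ _ Hfree
                          (fun x => proj1_sig (h x))) with (x := x).
  - exact (proj2_sig (h x)).
  - exact (adequate_morph_comp _ _ _ _ _ (adequate_morph_proj1_sig _ _ _ _ _) Hh).
  - intros s; rewrite Hhi; reflexivity.
Qed.

Lemma free_adequate_monoid_ind Sigma (M : AdequateMonoid) iota
  (Hfree : is_free_adequate_monoid Sigma M iota) (P : M -> Prop)
  (P_mul : forall x y, P x -> P y -> P (mul M x y))
  (P_plus : forall x, P x -> P (plus M x))
  (P_star : forall x, P x -> P (star M x))
  (P_one : P (one M))
  (P_gen : forall s, P (iota s)) : forall x, P x.
Proof.
  destruct (Hfree (sub_adequate_monoid M P P_mul P_plus P_star P_one)
              (fun s => exist _ (iota s) (P_gen s))) as [h [[[Hh Hh1] Hhi] _]].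
  intros x; rewrite <- (free_adequate_monoid_endo_id _ _ _ Hfree
                          (fun x => proj1_sig (h x))) with (x := x).
  - exact (proj2_sig (h x)).
  - split.
    + exact (adequate_morph_comp _ _ _ _ _ (adequate_morph_proj1_sig _ _ _ _ _) Hh).
    + rewrite Hh1; reflexivity.
  - intros s; rewrite Hhi; reflexivity.
Qed.

Lemma idempotent_mul (S : AdequateSemigroup) (e f : S) :
  mul S e e = e -> mul S f f = f -> mul S (mul S e f) (mul S e f) = mul S e f.
Proof.
  intros He Hf.
  rewrite <- mulA, (mulA S f e f), <- (idem_comm S e f He Hf), <- mulA, Hf,
    mulA, He; reflexivity.
Qed.

Lemma length0_idempotent_mul (S : AdequateSemigroup) (d : S -> nat)
  (d_mul : forall x y, d (mul S x y) = d x + d y) (x y : S) :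
  (d x = 0 -> mul S x x = x) -> (d y = 0 -> mul S y y = y) ->
  d (mul S x y) = 0 -> mul S (mul S x y) (mul S x y) = mul S x y.
Proof.
  rewrite d_mul; intros Hx Hy Hxy.
  apply idempotent_mul; [apply Hx | apply Hy]; lia.
Qed.

Lemma free_adequate_semigroup_J_trivial Sigma (S : AdequateSemigroup) iota :
  is_free_adequate_semigroup Sigma S iota -> J_trivial S (mul S).
Proof.
  intros Hfree.
  destruct (Hfree nat_adequate (fun _ => 1)) as [d [[[d_mul _] d_gen] _]].
  apply (graded_J_trivial S (mul S) (mulA S) (idem_comm S) d d_mul).
  apply (free_adequate_semigroup_ind _ _ _ Hfree
           (fun x => d x = 0 -> mul S x x = x)).
  - exact (length0_idempotent_mul S d d_mul).
  - intros; apply plus_idem.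
  - intros; apply star_idem.
  - intros s; rewrite d_gen; discriminate.
Qed.

Lemma free_adequate_monoid_J_trivial Sigma (M : AdequateMonoid) iota :
  is_free_adequate_monoid Sigma M iota -> J_trivial M (mul M).
Proof.
  intros Hfree.
  destruct (Hfree nat_adequate_monoid (fun _ => 1))
    as [d [[[[d_mul _] _] d_gen] _]].
  apply (graded_J_trivial M (mul M) (mulA M) (idem_comm M) d d_mul).
  apply (free_adequate_monoid_ind _ _ _ Hfree
           (fun x => d x = 0 -> mul M x x = x)).
  - exact (length0_idempotent_mul M d d_mul).
  - intros; apply plus_idem.
  - intros; apply star_idem.
  - intros; apply mul1x.
  - intros s; rewrite d_gen; discriminate.
Qed.

Theorem theorem7p2 :
  (forall (Sigma : Type) (S : AdequateSemigroup) (iota : Sigma -> S),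
      is_free_adequate_semigroup Sigma S iota -> J_trivial S (mul S)) /\
  (forall (Sigma : Type) (M : AdequateMonoid) (iota : Sigma -> M),
      is_free_adequate_monoid Sigma M iota -> J_trivial M (mul M)).
Proof.
  split.
  - exact free_adequate_semigroup_J_trivial.
  - exact free_adequate_monoid_J_trivial.
Qed.
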